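(* For every integer $k\ge 6$, there are infinitely many (pairwise non-isomorphic) $k$-vertex-critical graphs that are simultaneously $2P_2$-free, $(K_3+P_1)$-free and $C_5$-free.
   Context: $\chi(G)$ denotes the chromatic number of $G$. A graph $G$ is $k$-vertex-critical if $\chi(G)=k$ and $\chi(G-v)<k$ for every vertex $v$ of $G$. $2P_2$ is the disjoint union of two copies of the path on two vertices; $K_3+P_1$ is the disjoint union of a triangle and an isolated vertex; $C_5$ is the 5-cycle. A graph is $H$-free if it contains no induced subgraph isomorphic to $H$. *)

From HB Require Import structures.
From mathcomp Require Import all_boot.
Set Implicit Arguments. Unset Strict Implicit. Unset Printing Implicit Defensive.

Record sgraph := SGraph {
  vert : finType;
  adj : rel vert;
  adj_sym : symmetric adj;
  adj_irrefl : irreflexive adj }.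

Definition colorable_on (G : sgraph) (A : {set vert G}) (c : nat) : Prop :=
  exists f : vert G -> 'I_c,
    forall x y, x \in A -> y \in A -> adj x y -> f x != f y.

Definition colorable (G : sgraph) (c : nat) : Prop := colorable_on [set: vert G] c.

Definition chromatic_number_eq (G : sgraph) (k : nat) : Prop :=
  colorable G k /\ ~ colorable G k.-1.

Definition vertex_critical (G : sgraph) (k : nat) : Prop :=
  chromatic_number_eq G k /\ forall v : vert G, colorable_on [set~ v] k.-1.

Definition induced_sub (H G : sgraph) : Prop :=
  exists phi : vert H -> vert G, injective phi /\
    forall x y, adj (phi x) (phi y) = adj x y.

Definition Hfree (H G : sgraph) : Prop := ~ induced_sub H G.

Definition isomorphic (G1 G2 : sgraph) : Prop :=
  exists phi : vert G1 -> vert G2, bijective phi /\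
    forall x y, adj (phi x) (phi y) = adj x y.

Definition sym_closure n (e : rel 'I_n) : rel 'I_n :=
  fun x y => (x != y) && (e x y || e y x).

Lemma sym_closure_sym n (e : rel 'I_n) : symmetric (sym_closure e).
Proof. by move=> x y; rewrite /sym_closure eq_sym orbC. Qed.

Lemma sym_closure_irr n (e : rel 'I_n) : irreflexive (sym_closure e).
Proof. by move=> x; rewrite /sym_closure eqxx. Qed.

Definition mk_graph n (e : rel 'I_n) : sgraph :=
  SGraph (@sym_closure_sym n e) (@sym_closure_irr n e).

Definition twoP2 : sgraph := mk_graph (fun x y : 'I_4 =>
  ((val x == 0) && (val y == 1)) || ((val x == 2) && (val y == 3))).

Definition K3P1 : sgraph := mk_graph (fun x y : 'I_4 =>
  (val x < 3) && (val y < 3)).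

Definition C5 : sgraph := mk_graph (fun x y : 'I_5 =>
  val y == (val x).+1 %% 5).

From mathcomp Require Import all_boot zify.

(* The graphs are the complements of the powers C_n^r of the cycle, with
   n = m (r + 1) + 1 and m >= 5.  A colour class of the complement is a clique
   of C_n^r, i.e. a set of at most r + 1 consecutive vertices, so m colours are
   too few, while m + 1 blocks of consecutive vertices suffice and removing one
   vertex leaves a path that splits into m such blocks.  Since n > 5 r, the
   2r-neighbourhood of a vertex of C_n^r induces an integer unit interval graph.
   The complements C_4, claw and C_5 of 2P_2, K_3 + P_1 and C_5 have radius at
   most 2, so an induced copy would lie in such a neighbourhood; but none of
   them is a unit interval graph.  Different r give different orders n. *)

Set Implicit Arguments.
Unset Strict Implicit.
Unset Printing Implicit Defensive.

Definition dist (x y : nat) := (x - y) + (y - x).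

Lemma dist_leq a b r : (dist a b <= r) = (a <= b + r) && (b <= a + r).
Proof. by rewrite /dist; apply/idP/andP; lia. Qed.

Definition cdist (n x y : nat) := minn (dist x y) (n - dist x y).

Lemma cdistC n x y : cdist n x y = cdist n y x.
Proof. by rewrite /cdist /dist addnC. Qed.

Lemma cdistnn n x : cdist n x x = 0.
Proof. by rewrite /cdist /dist subnn min0n. Qed.

Lemma cdist_eq0 n x y : x < n -> y < n -> cdist n x y = 0 -> x = y.
Proof. by rewrite /cdist /dist => *; lia. Qed.

Lemma cdist_triangle n x y z : x < n -> y < n -> z < n ->
  cdist n x z <= cdist n x y + cdist n y z.
Proof. by rewrite /cdist /dist => *; lia. Qed.

Lemma cdist_le_dist n x y : cdist n x y <= dist x y.
Proof. exact: geq_minl. Qed.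

Lemma cdist_small n r p q : 5 * r < n -> p <= 4 * r -> q <= 4 * r ->
  (cdist n p q <= r) = (dist p q <= r).
Proof. by rewrite /cdist /dist => *; apply/idP/idP; lia. Qed.

Lemma modn_small_double m d : m < d.*2 -> m %% d = if m < d then m else m - d.
Proof.
case: ifP => [/modn_small // | /negbT]; rewrite -leqNgt => le_dm lt_m2d.
by rewrite -{1}(subnK le_dm) modnDr modn_small //; lia.
Qed.

Lemma cdist_modDr n s x y : x < n -> y < n ->
  cdist n ((x + s) %% n) ((y + s) %% n) = cdist n x y.
Proof.
move=> xn yn; rewrite -(modnDmr x) -(modnDmr y).
have := ltn_pmod s (leq_ltn_trans (leq0n x) xn).
move: (s %% n) => t tn; rewrite !modn_small_double; try lia.
by do 2 case: ifP; rewrite /cdist /dist; lia.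
Qed.

Lemma dist_lt_eqdiv a b d : 0 < d -> a %/ d = b %/ d -> dist a b < d.
Proof.
move=> d_gt0 eq_ab; rewrite /dist (divn_eq a d) (divn_eq b d) eq_ab.
have := ltn_pmod a d_gt0; have := ltn_pmod b d_gt0; lia.
Qed.

Section LocalCoordinate.

Variables (n r c : nat).
Hypotheses (n_gt5r : 5 * r < n) (c_lt_n : c < n).

(* The rotation of Z_n sending c to 2 r: it maps the vertices at cyclic
   distance at most 2 r from c onto the interval [0, 4 r]. *)
Definition lcoord (y : nat) := (y + (n + 2 * r - c)) %% n.

Lemma cdist_lcoord y z : y < n -> z < n -> cdist n (lcoord y) (lcoord z) = cdist n y z.
Proof. exact: cdist_modDr. Qed.

Lemma lcoord_inj y z : y < n -> z < n -> lcoord y = lcoord z -> y = z.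
Proof. by move=> yn zn eq_yz; apply: (cdist_eq0 yn zn); rewrite -cdist_lcoord // eq_yz cdistnn. Qed.

Lemma lcoord_le y : y < n -> cdist n c y <= 2 * r -> lcoord y <= 4 * r.
Proof.
move=> yn; rewrite -cdist_lcoord //.
have -> : lcoord c = 2 * r.
  by rewrite /lcoord addnC subnK ?modnDl ?modn_small; lia.
have := ltn_pmod (y + (n + 2 * r - c)) (leq_ltn_trans (leq0n y) yn).
rewrite -/(lcoord y) /cdist /dist; lia.
Qed.

Lemma cdist_lcoord_small y z : y < n -> z < n ->
  cdist n c y <= 2 * r -> cdist n c z <= 2 * r ->
  (cdist n y z <= r) = (dist (lcoord y) (lcoord z) <= r).
Proof.
by move=> yn zn cy cz; rewrite -cdist_lcoord // cdist_small // lcoord_le.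
Qed.

End LocalCoordinate.

Definition cycle_pow_compl_rel n r : rel 'I_n := fun x y => r < cdist n x y.

Lemma cycle_pow_compl_rel_sym n r : symmetric (@cycle_pow_compl_rel n r).
Proof. by move=> x y; rewrite /cycle_pow_compl_rel cdistC. Qed.

Lemma cycle_pow_compl_rel_irr n r : irreflexive (@cycle_pow_compl_rel n r).
Proof. by move=> x; rewrite /cycle_pow_compl_rel cdistnn. Qed.

Definition compl_cycle_pow n r : sgraph :=
  SGraph (@cycle_pow_compl_rel_sym n r) (@cycle_pow_compl_rel_irr n r).

Lemma card_cdist_clique n r (S : {set 'I_n}) : 5 * r < n ->
  {in S &, forall x y : 'I_n, cdist n x y <= r} -> #|S| <= r.+1.
Proof.
move=> n_gt5r clS; have [-> | [c cS]] := set_0Vmem S; first by rewrite cards0.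
pose lc (y : 'I_n) := lcoord n r c y.
have near y : y \in S -> cdist n c y <= 2 * r.
  by move=> yS; apply: leq_trans (clS _ _ cS yS) _; rewrite leq_pmull.
have close y z : y \in S -> z \in S -> dist (lc y) (lc z) <= r.
  by move=> yS zS; rewrite -cdist_lcoord_small ?near ?clS.
have [m mS min_m] := arg_minnP lc cS.
rewrite -[r.+1]card_ord.
apply: (@leq_card_in _ _ (fun y => inord (lc y - lc m))) => y z yS zS.
have := close _ _ yS mS; have := close _ _ zS mS.
have := min_m _ yS; have := min_m _ zS; rewrite /dist => ? ? ? ?.
move/(congr1 val); rewrite /= !inordK ?ltnS; try lia.
move=> eq_yz; apply/val_inj/(lcoord_inj (r := r) (c := c) (ltn_ord y) (ltn_ord z)).
by rewrite -/(lc y) -/(lc z); lia.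
Qed.

Lemma colorable_on_blocks n r m s (A : {set 'I_n}) : 0 < m ->
  {in A, forall x : 'I_n, (x + s) %% n < m * r.+1} ->
  @colorable_on (compl_cycle_pow n r) A m.
Proof.
move=> m_gt0 in_blocks.
exists (fun x : 'I_n => insubd (Ordinal m_gt0) (((x + s) %% n) %/ r.+1)) => x y xA yA.
apply: contraTneq => /(congr1 val) /=.
rewrite !insubdK -?topredE /= ?ltn_divLR ?in_blocks // => /dist_lt_eqdiv same_block.
rewrite /cycle_pow_compl_rel -leqNgt -(cdist_modDr s) //.
exact: leq_trans (cdist_le_dist _ _ _) (same_block _).
Qed.

Lemma compl_cycle_pow_colorable n r m : 0 < m -> n <= m * r.+1 ->
  colorable (compl_cycle_pow n r) m.
Proof.
move=> m_gt0 le_n; apply: (colorable_on_blocks (s := 0)) => // x _.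
by rewrite addn0 modn_small // (leq_trans _ le_n).
Qed.

(* Rotating by n - 1 - v moves v to n - 1 and every other vertex below it. *)
Lemma compl_cycle_pow_colorable_del n r m (v : 'I_n) : 0 < m -> n <= (m * r.+1).+1 ->
  @colorable_on (compl_cycle_pow n r) [set~ v] m.
Proof.
move=> m_gt0 le_n; apply: (colorable_on_blocks (s := n - v.+1)) => // x.
rewrite !inE => xv; have xv' : x != v :> nat by [].
have xn := ltn_ord x; have vn := ltn_ord v.
by rewrite modn_small_double; [case: ifP|]; lia.
Qed.

Lemma compl_cycle_pow_not_colorable n r m : 5 * r < n -> m * r.+1 < n ->
  ~ colorable (compl_cycle_pow n r) m.
Proof.
move=> n_gt5r lt_n [f proper_f].
have class_small i : #|[set x | f x == i]| <= r.+1.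
  apply: card_cdist_clique => // x y; rewrite !inE => /eqP fx /eqP fy.
  rewrite leqNgt; apply/negP => xy.
  by have := proper_f x y (in_setT x) (in_setT y) xy; rewrite fx fy eqxx.
suff : n <= m * r.+1 by rewrite leqNgt lt_n.
rewrite -{1}(card_ord n) -sum1_card (partition_big f xpredT) //=.
rewrite -[m in m * _]card_ord -sum_nat_const; apply: leq_sum => i _.
rewrite sum1_card; apply: leq_trans (class_small i).
by apply/eq_leq/eq_card => x; rewrite inE.
Qed.

Lemma compl_cycle_pow_vertex_critical m r : 5 <= m ->
  vertex_critical (compl_cycle_pow (m * r.+1).+1 r) m.+1.
Proof.
move=> m_ge5; have m_gt0 : 0 < m by apply: leq_trans m_ge5.
have n_gt5r : 5 * r < (m * r.+1).+1 by nia.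
split; first split.
- by apply: compl_cycle_pow_colorable; rewrite // mulSn addSn ltnS leq_addl.
- exact: compl_cycle_pow_not_colorable.
- by move=> v; apply: compl_cycle_pow_colorable_del.
Qed.

Lemma interval_noC4 r a b c d :
  dist a b <= r -> dist b c <= r -> dist c d <= r -> dist d a <= r ->
  r < dist a c -> r < dist b d -> False.
Proof. rewrite !ltnNge !dist_leq; lia. Qed.

Lemma interval_noclaw r a b c d :
  dist d a <= r -> dist d b <= r -> dist d c <= r ->
  r < dist a b -> r < dist a c -> r < dist b c -> False.
Proof. rewrite !ltnNge !dist_leq; lia. Qed.

Lemma interval_noC5 r a b c d e :
  dist a b <= r -> dist b c <= r -> dist c d <= r -> dist d e <= r -> dist e a <= r ->
  r < dist a c -> r < dist a d -> r < dist b d -> r < dist b e -> r < dist c e -> False.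
Proof. rewrite !ltnNge !dist_leq; lia. Qed.

Lemma induced_interval_model (H : sgraph) n r (c : vert H) : 5 * r < n ->
  (forall x, exists2 w, ~~ adj c w & ~~ adj w x) ->
  induced_sub H (compl_cycle_pow n r) ->
  exists p : vert H -> nat, forall x y, adj x y = (r < dist (p x) (p y)).
Proof.
move=> n_gt5r radius2 [phi [_ adj_phi]].
have near x : cdist n (phi c) (phi x) <= 2 * r.
  have [w cw wx] := radius2 x; rewrite -!adj_phi /= /cycle_pow_compl_rel -!leqNgt in cw wx.
  apply: leq_trans (cdist_triangle (ltn_ord _) (ltn_ord (phi w)) (ltn_ord _)) _.
  by rewrite mul2n -addnn leq_add.
exists (fun x => lcoord n r (phi c) (phi x)) => x y.
rewrite -adj_phi /= /cycle_pow_compl_rel ltnNge.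
by rewrite (cdist_lcoord_small n_gt5r (ltn_ord (phi c))) ?near // -ltnNge.
Qed.

Local Notation ord4 i := (@Ordinal 4 i isT).
Local Notation ord5 i := (@Ordinal 5 i isT).

Lemma compl_cycle_pow_2P2_free n r : 5 * r < n -> Hfree twoP2 (compl_cycle_pow n r).
Proof.
move=> n_gt5r /(induced_interval_model (H := twoP2) (c := ord4 0) n_gt5r) [].
  by case=> -[|[|[|[|//]]]] ?; [exists (ord4 0) | exists (ord4 2) | exists (ord4 0) | exists (ord4 0)].
move=> p model; apply: (@interval_noC4 r (p (ord4 0)) (p (ord4 2)) (p (ord4 1)) (p (ord4 3)));
  by rewrite 1?[_ <= r]leqNgt -model.
Qed.

Lemma compl_cycle_pow_K3P1_free n r : 5 * r < n -> Hfree K3P1 (compl_cycle_pow n r).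
Proof.
move=> n_gt5r /(induced_interval_model (H := K3P1) (c := ord4 3) n_gt5r) [].
  by case=> -[|[|[|[|//]]]] ?; exists (ord4 3).
move=> p model; apply: (@interval_noclaw r (p (ord4 0)) (p (ord4 1)) (p (ord4 2)) (p (ord4 3)));
  by rewrite 1?[_ <= r]leqNgt -model.
Qed.

Lemma compl_cycle_pow_C5_free n r : 5 * r < n -> Hfree C5 (compl_cycle_pow n r).
Proof.
move=> n_gt5r /(induced_interval_model (H := C5) (c := ord5 0) n_gt5r) [].
  by case=> -[|[|[|[|[|//]]]]] ?;
    [exists (ord5 0) | exists (ord5 3) | exists (ord5 0) | exists (ord5 0) | exists (ord5 2)].
move=> p model; apply: (@interval_noC5 r (p (ord5 0)) (p (ord5 2)) (p (ord5 4)) (p (ord5 1)) (p (ord5 3)));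
  by rewrite 1?[_ <= r]leqNgt -model.
Qed.

Theorem theorem2p7 (k : nat) : 6 <= k ->
  exists G : nat -> sgraph,
    (forall i, vertex_critical (G i) k /\ Hfree twoP2 (G i) /\
               Hfree K3P1 (G i) /\ Hfree C5 (G i)) /\
    (forall i j, i <> j -> ~ isomorphic (G i) (G j)).
Proof.
case: k => [|m] // m_ge5.
exists (fun r => compl_cycle_pow (m * r.+1).+1 r); split=> [r | r s neq_rs].
  have n_gt5r : 5 * r < (m * r.+1).+1 by nia.
  split; first exact: compl_cycle_pow_vertex_critical.
  split; first exact: compl_cycle_pow_2P2_free.
  by split; [apply: compl_cycle_pow_K3P1_free | apply: compl_cycle_pow_C5_free].
case=> phi [/bij_eq_card]; rewrite !card_ord => /eqP; rewrite eqSS => eq_n _.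
by apply: neq_rs; nia.
Qed.
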